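(* Let $G$ be a graph on the vertex set $[n]=\{1,\ldots,n\}$ and let $k$ be an integer with $0\le k\le n$. Then $G$ is $k$-connected if and only if $\beta_{i,i+1}(\mathbb{k}[\Delta(G)])=0$ for all integers $i\ge n-k$. In particular, $\kappa(G)=\max\{k\in\{0,\ldots,n\}\mid \beta_{i,i+1}(\mathbb{k}[\Delta(G)])=0\text{ for all } i\ge n-k\}$.
   Context: $\mathbb{k}$ is a field (of characteristic zero) and $R=\mathbb{k}[x_1,\ldots,x_n]$. For a simplicial complex $\Gamma$ on $[n]$, the Stanley–Reisner ideal $I_\Gamma$ is generated by the monomials $x_{i_1}\cdots x_{i_l}$ with $\{i_1,\ldots,i_l\}\notin\Gamma$, and the face ring is $\mathbb{k}[\Gamma]=R/I_\Gamma$. The clique complex $\Delta(G)$ of a graph $G$ is the simplicial complex whose faces are the vertex sets of cliques of $G$. $\beta_{i,j}(M)=\dim_{\mathbb{k}}\mathrm{Tor}_i^R(M,\mathbb{k})_j$ are the graded Betti numbers (standard $\mathbb{Z}$-grading with $\deg x_i=1$). A graph is $k$-connected if it has at least $k$ vertices and removing any set of fewer than $k$ vertices leaves a connected graph (every graph is $0$-connected); $\kappa(G)$ is the largest $k$ such that $G$ is $k$-connected. *)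

From HB Require Import structures.
From mathcomp Require Import all_boot all_order all_algebra.
Set Implicit Arguments. Unset Strict Implicit. Unset Printing Implicit Defensive.
Import GRing.Theory.
Local Open Scope ring_scope.

Definition simple_graph (n : nat) (e : rel 'I_n) : Prop :=
  symmetric e /\ irreflexive e.

Definition clique_complex (n : nat) (e : rel 'I_n) : pred {set 'I_n} :=
  fun s => [forall u, forall v, ((u \in s) && (v \in s) && (u != v)) ==> e u v].

Definition connected_minus (n : nat) (e : rel 'I_n) (S : {set 'I_n}) : bool :=
  [forall u, forall v, ((u \notin S) && (v \notin S)) ==>
     connect [rel x y | [&& e x y, x \notin S & y \notin S]] u v].

Definition kconnected (n : nat) (e : rel 'I_n) (k : nat) : bool :=
  (k <= n)%N && [forall S : {set 'I_n}, (#|S| < k)%N ==> connected_minus e S].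

Definition kappa (n : nat) (e : rel 'I_n) : nat :=
  \max_(k < n.+1 | kconnected e k) (k : nat).

(* ---------- graded Betti numbers of the face ring k[Gamma] ----------
   beta_{i,j}(k[Gamma]) = dim Tor_i^R(k[Gamma], k)_j, computed as the homology
   of k[Gamma] (x)_R K(x_1..x_n), K the Koszul resolution of k.
   Degree-j part of k[Gamma] (x) /\^i k^n has basis m (x) e_F where m is a
   monomial of degree j - i whose support is a face of Gamma (these monomials
   form the k-basis of k[Gamma] = R / I_Gamma) and F is an i-subset of [n].
   Differential: d(m e_F) = sum_{l in F} (-1)^{#{g in F | g < l}} (x_l m) e_{F\l},
   where x_l m = 0 in k[Gamma] when its support is not a face. *)

(* monomials of degree <= j: exponent vectors with entries <= j *)
Definition monom (n j : nat) := {ffun 'I_n -> 'I_j.+1}.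
Definition mdeg (n j : nat) (a : monom n j) : nat := (\sum_v (a v : nat))%N.
Definition msupp (n j : nat) (a : monom n j) : {set 'I_n} :=
  [set v | (a v : nat) != 0%N].

Definition kbasis (n : nat) (Gam : pred {set 'I_n}) (i j : nat)
  : {set monom n j * {set 'I_n}} :=
  [set p : monom n j * {set 'I_n} | [&& (i <= j)%N, mdeg p.1 == (j - i)%N, #|p.2| == i & Gam (msupp p.1)]].

Definition kentry (F : fieldType) (n j : nat) (p q : monom n j * {set 'I_n}) : F :=
  match [pick l | [&& l \notin q.2, p.2 == l |: q.2 &
                    [forall v, (q.1 v : nat) == (p.1 v + (v == l))%N]]] with
  | Some l => (-1) ^+ #|[set g in p.2 | (g < l)%N]|
  | None => 0
  end.

(* differential C_{i+1} -> C_i in internal degree j (row-vector convention) *)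
Definition kdiff (F : fieldType) (n : nat) (Gam : pred {set 'I_n}) (i j : nat)
  : 'M[F]_(#|kbasis Gam i.+1 j|, #|kbasis Gam i j|) :=
  \matrix_(r, c) kentry F (enum_val r) (enum_val c).

(* beta_{i,j} = dim ker d_i - rank d_{i+1}  (d_0 = 0) *)
Definition betti (F : fieldType) (n : nat) (Gam : pred {set 'I_n}) (i j : nat) : nat :=
  (#|kbasis Gam i j|
   - (if i is i'.+1 then \rank (kdiff F Gam i' j) else 0)
   - \rank (kdiff F Gam i j))%N.

From HB Require Import structures.
From mathcomp Require Import all_boot all_order all_algebra.
From mathcomp Require Import zify.
Set Implicit Arguments. Unset Strict Implicit. Unset Printing Implicit Defensive.
Import GRing.Theory.

(* In internal degree i+1 the Koszul complex computing Tor(k[Delta(G)], k) is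
     <e_W : |W| = i+1>  ->  <x_v e_G : |G| = i>  ->  <x_s x_t e_H : |H| = i-1, {s,t} a clique>,
   and the first map is injective, so beta_{i,i+1} vanishes iff every cycle of
   the middle term is a boundary.  If the induced graph G[W] is connected for
   every (i+1)-set W, a cycle that vanishes on one chosen term x_r e_{W\r} of
   each d(e_W) vanishes identically: for an edge st of G[W] the coefficient of
   x_s x_t e_{W\s\t} in its boundary links the terms at s and at t.  Hence the
   cycles have dimension at most that of the boundaries.  Conversely, if G[W]
   has a component P avoiding some vertex of W, the part of d(e_W) indexed by P
   is a cycle, and a linear form that is +-1 on one term inside and one outside P
   kills all boundaries but not that cycle.  Removing fewer than k vertices leaves
   induced subgraphs on more than n-k vertices, which gives the theorem; no
   assumption on the characteristic is used. *)

Section BigSupport.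
Local Open Scope ring_scope.
Variables (V : nmodType) (I : finType) (B : {set I}) (G : I -> V).

Lemma big_supp1 y1 : y1 \in B -> {in B, forall y, y != y1 -> G y = 0} ->
  \sum_(y in B) G y = G y1.
Proof.
move=> y1B G0; rewrite (bigD1 y1) //= big1 ?addr0 // => y /andP[yB yy1].
exact: G0.
Qed.

Lemma big_supp2 y1 y2 : y1 \in B -> y2 \in B -> y1 != y2 ->
  {in B, forall y, y != y1 -> y != y2 -> G y = 0} ->
  \sum_(y in B) G y = G y1 + G y2.
Proof.
move=> y1B y2B y12 G0; rewrite (bigD1 y1) //= (bigD1 y2) /=; last by rewrite y2B eq_sym.
by rewrite big1 ?addr0 // => y /andP[/andP[yB yy1] yy2]; apply: G0.
Qed.

End BigSupport.

Section RowCoordinates.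
Local Open Scope ring_scope.
Variable F : fieldType.

Definition coord (T : finType) (A : {set T}) (w : 'rV[F]_#|A|) (x : T) : F :=
  \sum_(k | enum_val k == x) w 0 k.

Lemma coord_enum_val (T : finType) (A : {set T}) (w : 'rV[F]_#|A|) k :
  coord w (enum_val k) = w 0 k.
Proof. by rewrite /coord (big_pred1 k) // => k'; rewrite (inj_eq enum_val_inj). Qed.

Lemma row_coord_eq0 (T : finType) (A : {set T}) (w : 'rV[F]_#|A|) :
  {in A, forall x, coord w x = 0} -> w = 0.
Proof. by move=> w0; apply/rowP => k; rewrite mxE -coord_enum_val w0 ?enum_valP. Qed.

Lemma coord_row_enum (T : finType) (A : {set T}) (g : T -> F) :
  {in A, forall x, coord (\row_(k < #|A|) g (enum_val k)) x = g x}.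
Proof. by move=> x xA; rewrite -(enum_rankK_in xA xA) coord_enum_val mxE. Qed.

Section SetMatrices.
Variables (T T' : finType) (A : {set T}) (B : {set T'}) (h : T -> T' -> F).
Local Notation M := (\matrix_(r < #|A|, c < #|B|) h (enum_val r) (enum_val c)).

Lemma mulmx_set_matrix (w : 'rV[F]_#|A|) c :
  (w *m M) 0 c = \sum_(x in A) coord w x * h x (enum_val c).
Proof.
by rewrite mxE (big_enum_val (fun x => coord w x * h x _)); apply: eq_bigr => k _;
  rewrite coord_enum_val mxE.
Qed.

Lemma coord_row_set_matrix r : {in B, forall y, coord (row r M) y = h (enum_val r) y}.
Proof. by move=> y yB; rewrite -(enum_rankK_in yB yB) coord_enum_val !mxE. Qed.

End SetMatrices.

Lemma mulmx_col_set (T : finType) (A : {set T}) (w : 'rV[F]_#|A|) (phi : T -> F) :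
  (w *m \col_(k < #|A|) phi (enum_val k)) 0 0 = \sum_(x in A) coord w x * phi x.
Proof.
by rewrite mxE (big_enum_val (fun x => coord w x * phi x)); apply: eq_bigr => k _;
  rewrite coord_enum_val mxE.
Qed.

End RowCoordinates.

Section RankBounds.
Local Open Scope ring_scope.
Variable F : fieldType.

Lemma mxrank_le_inj_mul m p q (K : 'M[F]_(m, p)) (P : 'M[F]_(p, q)) :
  (forall w : 'rV_p, (w <= K)%MS -> w *m P = 0 -> w = 0) -> (\rank K <= q)%N.
Proof.
move=> Pinj; rewrite -(mxrank_mul_ker K P).
have /eqP-> : (K :&: kermx P)%MS == 0.
  by apply/rowV0P => v; rewrite sub_capmx => /andP[vK /sub_kermxP]; apply: Pinj.
by rewrite mxrank0 addn0 rank_leq_col.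
Qed.

Lemma mxrank_lt_ker a b c (A : 'M[F]_(a, b)) (D : 'M[F]_(b, c)) (z : 'rV_b) (phi : 'cV_b) :
  A *m D = 0 -> z *m D = 0 -> A *m phi = 0 -> z *m phi != 0 ->
  (\rank A < b - \rank D)%N.
Proof.
move=> AD zD Aphi zphi; rewrite -mxrank_ker; apply: rank_ltmx.
have AK : (A <= kermx D)%MS by apply/sub_kermxP.
rewrite ltmxE AK /=; apply: contra zphi => /submxP[X KX].
have /submxP[Y ->] : (z <= kermx D)%MS by apply/sub_kermxP.
by rewrite KX -!mulmxA Aphi !mulmx0.
Qed.

End RankBounds.

Section Monomials.
Variable n : nat.

(* [inord] sends exponents above j to 0, hence the bounds in the lemmas below. *)
Definition monom_of j (f : 'I_n -> nat) : monom n j := [ffun v => inord (f v)].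
Definition mone j := monom_of j (fun _ => 0%N).
Definition mvar j a := monom_of j (fun t => nat_of_bool (t == a)).
Definition mvar2 j a b := monom_of j (fun t => ((t == a) + (t == b))%N).

Lemma monom_ofE j f t : (f t <= j)%N -> (monom_of j f t : nat) = f t.
Proof. by move=> ftj; rewrite ffunE inordK. Qed.

Lemma monom_ext j (m m' : monom n j) : (forall t, (m t : nat) = m' t) -> m = m'.
Proof. by move=> mm'; apply/ffunP => t; apply/val_inj/mm'. Qed.

Lemma moneE j t : (mone j t : nat) = 0%N.
Proof. by rewrite monom_ofE. Qed.

Lemma mvarE j a t : (mvar j.+1 a t : nat) = (t == a).
Proof. by rewrite monom_ofE //; case: (t == a). Qed.

Lemma mvar2E j a b t : (mvar2 j.+2 a b t : nat) = ((t == a) + (t == b))%N.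
Proof. by rewrite monom_ofE //; case: (t == a); case: (t == b). Qed.

Lemma mvar_inj j : injective (mvar j.+1).
Proof.
move=> a b /(congr1 (fun m : monom n j.+1 => (m a : nat))).
by rewrite !mvarE eqxx; case: eqP.
Qed.

Lemma sum_indicator a : (\sum_(t : 'I_n) (t == a))%N = 1%N.
Proof. by rewrite (bigD1 a) //= eqxx big1 // => t /negbTE ->. Qed.

Lemma mdeg_mone j : mdeg (mone j) = 0%N.
Proof. by rewrite /mdeg big1 // => t _; rewrite moneE. Qed.

Lemma mdeg_mvar j a : mdeg (mvar j.+1 a) = 1%N.
Proof. by rewrite /mdeg (eq_bigr _ (fun t _ => mvarE j a t)) sum_indicator. Qed.

Lemma mdeg_mvar2 j a b : mdeg (mvar2 j.+2 a b) = 2%N.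
Proof.
by rewrite /mdeg (eq_bigr _ (fun t _ => mvar2E j a b t)) big_split /= !sum_indicator.
Qed.

Lemma mdeg_eq0 j (m : monom n j) : mdeg m = 0%N -> m = mone j.
Proof.
move/eqP; rewrite /mdeg (sum_nat_eq0 predT) => /forallP m0.
by apply: monom_ext => t; rewrite moneE; apply/eqP/(implyP (m0 t)).
Qed.

Lemma mdeg_eq1 j (m : monom n j.+1) : mdeg m = 1%N -> exists a, m = mvar j.+1 a.
Proof.
rewrite /mdeg => m1.
have [a ma] : exists a, (0 < m a)%N.
  apply/existsP; move: m1; apply: contraPT; rewrite negb_exists => /forallP m0.
  by rewrite big1 // => t _; move: (m0 t); rewrite lt0n negbK => /eqP.
move: m1; rewrite (bigD1 a) //=.
set rest := (\sum_(i | i != a) _)%N => m1.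
have [ma1 rest0] : (m a : nat) = 1%N /\ rest = 0%N by move: ma m1; set x := (m a : nat); lia.
exists a; apply: monom_ext => t; rewrite mvarE.
have [->|ta] := eqVneq t a; first exact: ma1.
by move/eqP: rest0; rewrite (sum_nat_eq0 (fun i => i != a)) => /forallP/(_ t)/implyP/(_ ta)/eqP.
Qed.

Lemma mvar2_eq j s t b l : mvar2 j.+2 b l = mvar2 j.+2 s t ->
  (b = s /\ l = t) \/ (b = t /\ l = s).
Proof.
move=> Ebl; have h u : ((u == b) + (u == l) = (u == s) + (u == t))%N.
  by rewrite -!(mvar2E j) Ebl.
have := h b; rewrite eqxx.
case: (b =P s) => [bs|_]; case: (b =P t) => [bt|_] //= _.
- left; split => //; have := h t; rewrite eqxx -bt bs eqxx.
  by case: (s =P l).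
- left; split => //; have := h t; rewrite eqxx -bs.
  by case: (t =P b) => //= _; case: (t =P l).
- right; split => //; have := h s; rewrite eqxx -bt.
  by case: (s =P b) => //= _; case: (s =P l).
Qed.

Lemma msupp_mvar j a : msupp (mvar j.+1 a) = [set a].
Proof. by apply/setP => t; rewrite !inE mvarE; case: (t == a). Qed.

Lemma msupp_mvar2 j a b : msupp (mvar2 j.+2 a b) = [set a; b].
Proof. by apply/setP => t; rewrite !inE mvar2E; case: (t == a); case: (t == b). Qed.

End Monomials.

Section KoszulEntries.
Local Open Scope ring_scope.
Variables (F : fieldType) (n : nat).

Definition sgn (S : {set 'I_n}) (l : 'I_n) : F := (-1) ^+ #|[set g in S | (g < l)%N]|.

Lemma sgn_neq0 S l : sgn S l != 0.
Proof. by rewrite signr_eq0. Qed.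

Lemma sgnMsgn S l : sgn S l * sgn S l = 1.
Proof. by rewrite -exprD -signr_odd oddD addbb. Qed.

Lemma sgn_swap (W : {set 'I_n}) a b : a \in W -> b \in W -> a != b ->
  sgn W a * sgn (W :\ a) b + sgn W b * sgn (W :\ b) a = 0.
Proof.
wlog ab : a b / (a < b)%N.
  move=> wlog_ab aW bW a_b; case: (ltngtP a b) => [lt_ab|lt_ba|/val_inj eq_ab].
  - exact: wlog_ab.
  - by rewrite addrC wlog_ab // eq_sym.
  - by rewrite eq_ab eqxx in a_b.
move=> aW bW _; rewrite /sgn.
have -> : [set g in W :\ a | (g < b)%N] = [set g in W | (g < b)%N] :\ a.
  by apply/setP => t; rewrite !inE andbA [(t != a) && _]andbC.
have -> : [set g in W :\ b | (g < a)%N] = [set g in W | (g < a)%N].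
  apply/setP => t; rewrite !inE; case: (eqVneq t b) => [->|] //=.
  by rewrite ltnNge (ltnW ab) andbF.
rewrite (cardsD1 a [set g in W | (g < b)%N]) !inE aW ab /=.
by rewrite add1n exprS mulN1r mulNr [X in X + _]mulrC addrN.
Qed.

Lemma kentryE j (p q : monom n j * {set 'I_n}) l :
  l \notin q.2 -> p.2 = l |: q.2 ->
  (forall v, (q.1 v : nat) = (p.1 v + (v == l))%N) -> kentry F p q = sgn p.2 l.
Proof.
move=> lq pq qv; rewrite /kentry.
case: pickP => [l' /and3P[l'q /eqP pq' _] | /(_ l)].
  have : l' \in l |: q.2 by rewrite -pq pq' setU11.
  by rewrite in_setU1 (negbTE l'q) orbF => /eqP ->.
rewrite lq pq eqxx /= => /negbT; rewrite negb_forall => /existsP[v].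
by rewrite qv eqxx.
Qed.

Lemma kentry_neq0 j (p q : monom n j * {set 'I_n}) :
  kentry F p q != 0 -> exists l, [/\ l \notin q.2, p.2 = l |: q.2 &
     forall v, (q.1 v : nat) = (p.1 v + (v == l))%N].
Proof.
rewrite /kentry; case: pickP => [l /and3P[lq /eqP pq /forallP qv] _|]; last by rewrite eqxx.
by exists l; split => // v; apply/eqP/qv.
Qed.

End KoszulEntries.

Section LinearStrandBasis.
Variables (n : nat) (e : rel 'I_n).
Hypothesis Ge : simple_graph e.
Local Notation Gam := (clique_complex e).

Lemma clique_complexP (S : {set 'I_n}) :
  reflect {in S &, forall u v, u != v -> e u v} (Gam S).
Proof.
apply: (iffP forallP) => [h u v uS vS uv | h u].
  by move/forallP/(_ v): (h u); rewrite uS vS uv => /implyP; apply.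
by apply/forallP => v; apply/implyP => /andP[/andP[uS vS] uv]; apply: h.
Qed.

Lemma kbasis_deg0P i (p : monom n i.+1 * {set 'I_n}) : p \in kbasis Gam i.+1 i.+1 ->
  p.1 = mone n i.+1 /\ #|p.2| = i.+1.
Proof. by rewrite inE subnn => /and4P[_ /eqP/mdeg_eq0 -> /eqP]. Qed.

Lemma kbasis_deg1P i (p : monom n i.+1 * {set 'I_n}) : p \in kbasis Gam i i.+1 ->
  exists a, p.1 = mvar i.+1 a /\ #|p.2| = i.
Proof.
rewrite inE subSnn => /and4P[_ /eqP/mdeg_eq1[a ->] /eqP cp _].
by exists a.
Qed.

Lemma mem_kbasis_deg0 i (W : {set 'I_n}) : #|W| = i.+1 ->
  (mone n i.+1, W) \in kbasis Gam i.+1 i.+1.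
Proof.
move=> cW; rewrite inE /= leqnn cW eqxx subnn mdeg_mone /=.
by apply/clique_complexP => u v; rewrite inE moneE.
Qed.

Lemma mem_kbasis_deg1 i a (G : {set 'I_n}) : #|G| = i ->
  (mvar i.+1 a, G) \in kbasis Gam i i.+1.
Proof.
move=> cG; rewrite inE /= leqnSn cG eqxx subSnn mdeg_mvar msupp_mvar /=.
by apply/clique_complexP => u v; rewrite !inE => /eqP-> /eqP->; rewrite eqxx.
Qed.

Lemma mem_kbasis_deg2 m u u' (H : {set 'I_n}) : u = u' \/ e u u' -> #|H| = m ->
  (mvar2 m.+2 u u', H) \in kbasis Gam m m.+2.
Proof.
move=> uu' cH; have m2 : (m.+2 - m = 2)%N by rewrite -addn2 addKn.
rewrite inE /= cH m2 mdeg_mvar2 msupp_mvar2 !eqxx leqW //=.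
apply/clique_complexP => s t; rewrite !inE.
case: uu' => [<-|euu']; first by rewrite !orbb => /eqP-> /eqP->; rewrite eqxx.
by case/orP=> /eqP-> /orP[]/eqP->; rewrite ?eqxx // (proj1 Ge).
Qed.

End LinearStrandBasis.

Section LinearStrand.
Local Open Scope ring_scope.
Variables (F : fieldType) (n : nat) (e : rel 'I_n).
Hypothesis Ge : simple_graph e.
Local Notation Gam := (clique_complex e).
Local Notation T i := (monom n i.+1 * {set 'I_n})%type.
Local Notation sgn := (@sgn F n).

Definition bterm i (W : {set 'I_n}) v : T i := (mvar i.+1 v, W :\ v).

(* The terms x_v e_{W\v}, v in P, of the Koszul boundary of e_W, as a
   coefficient function on the basis. *)
Definition part_boundary i (W P : {set 'I_n}) (x : T i) : F :=
  \sum_(v in P) sgn W v * (x == bterm i W v)%:R.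

Lemma bterm_inj i W : injective (bterm i W).
Proof. by move=> v v' [/mvar_inj]. Qed.

Lemma bterm_eq i (W S : {set 'I_n}) r v : r \in W -> v \in S ->
  bterm i W r = bterm i S v -> W = S /\ r = v.
Proof.
move=> rW vS [/mvar_inj rv WS]; subst v; split=> //.
by rewrite -(setD1K rW) -(setD1K vS) WS.
Qed.

Lemma mem_bterm i (W : {set 'I_n}) v : #|W| = i.+1 -> v \in W ->
  bterm i W v \in kbasis Gam i i.+1.
Proof.
by move=> cW vW; apply: mem_kbasis_deg1; move: cW; rewrite (cardsD1 v) vW add1n => -[].
Qed.

Lemma sum_part_boundary i (B : {set T i}) (W P : {set 'I_n}) (h : T i -> F) :
  (forall v, v \in P -> bterm i W v \in B) ->
  \sum_(x in B) part_boundary W P x * h x = \sum_(v in P) sgn W v * h (bterm i W v).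
Proof.
move=> PB; under eq_bigr do rewrite /part_boundary mulr_suml.
rewrite exchange_big /=; apply: eq_bigr => v vP.
rewrite (big_supp1 (y1 := bterm i W v)) ?eqxx ?mulr1 ?PB //.
by move=> y _ /negbTE ->; rewrite mulr0 mul0r.
Qed.

Lemma kentry_deg0 i (W : {set 'I_n}) (x : T i) :
  kentry F (mone n i.+1, W) x = part_boundary W W x.
Proof.
case: (boolP [exists v in W, x == bterm i W v]) => [/existsP[v /andP[vW /eqP ->]]|/existsPn xW].
  rewrite /part_boundary (big_supp1 (y1 := v)) ?eqxx ?mulr1 //.
    by rewrite (kentryE F (l := v)) //= ?setD1K ?setD11 // => t; rewrite mvarE moneE.
  by move=> y _ yv; rewrite (inj_eq (@bterm_inj i W)) eq_sym (negbTE yv) mulr0.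
rewrite /part_boundary big1 => [|v vW]; last first.
  by move: (xW v); rewrite vW /= => /negbTE ->; rewrite mulr0.
apply/eqP; apply: contraTT isT => /(kentry_neq0 (F := F))[l [lx Wl xl]].
change (W = l |: x.2) in Wl.
have lW : l \in W by rewrite Wl setU11.
suff xbl : x = bterm i W l by move: (xW l); rewrite lW xbl eqxx.
case: x lx Wl xl {xW} => m G lG -> xl.
rewrite /bterm setU1K // [m](_ : _ = mvar i.+1 l) //.
by apply: monom_ext => t; rewrite [LHS]xl moneE mvarE.
Qed.

(* The only terms of d(x_v x_l e_H) come from v and l, which are adjacent and
   hence both in P; they cancel by sgn_swap. *)
Lemma part_boundary_cycle m (W P : {set 'I_n}) : P \subset W ->
  (forall a b, a \in P -> b \in W -> e a b -> b \in P) ->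
  forall c, c \in kbasis Gam m m.+2 ->
  \sum_(v in P) sgn W v * kentry F (bterm m.+1 W v) c = 0.
Proof.
move=> PW closedP c cC.
have [/existsP[v /andP[vP /(kentry_neq0 (F := F))[l [lc Wl cl]]]]|/existsPn c0] :=
  boolP [exists v in P, kentry F (bterm m.+1 W v) c != 0]; last first.
  by apply: big1 => v vP; move: (c0 v); rewrite vP negbK => /eqP ->; rewrite mulr0.
rewrite /= in Wl cl.
have vW : v \in W by apply: (subsetP PW).
have /setD1P[lv lW] : l \in W :\ v by rewrite Wl setU11.
have cvl t : (c.1 t : nat) = ((t == v) + (t == l))%N by rewrite cl mvarE.
have evl : e v l.
  move: cC; rewrite inE => /and4P[_ _ _ /clique_complexP]; apply; last by rewrite eq_sym.
    by rewrite inE cvl eqxx.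
  by rewrite inE cvl eqxx addn1.
have lP : l \in P by apply: closedP evl.
have c2 : c.2 = W :\ v :\ l by rewrite Wl setU1K.
have vl : v != l by rewrite eq_sym.
rewrite (big_supp2 (y1 := v) (y2 := l)) //; last first.
  move=> t tP tv tl; apply/eqP; rewrite mulf_eq0; apply/orP; right.
  apply: contraTT isT => /(kentry_neq0 (F := F)) [l' [_ _ /(_ t)]] /=.
  by rewrite cvl mvarE eqxx (negbTE tv) (negbTE tl).
rewrite (kentryE F (l := l)) //= (kentryE F (l := v)) /=; first exact: sgn_swap.
- by rewrite c2 !inE eqxx andbF.
- apply/setP => t; rewrite c2 !inE.
  by case: (eqVneq t v) => [->|] //=; rewrite vW eq_sym lv.
- by move=> t; rewrite cvl mvarE addnC.
Qed.

Lemma kentry_deg2_neq0 m (y : T m.+1) s t (H : {set 'I_n}) :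
  y \in kbasis Gam m.+1 m.+2 -> kentry F y (mvar2 m.+2 s t, H) != 0 ->
  y = (mvar m.+2 s, t |: H) \/ y = (mvar m.+2 t, s |: H).
Proof.
move=> yB /(kentry_neq0 (F := F))[l [_ y2 yl]].
have [b [y1 _]] := kbasis_deg1P yB.
have : mvar2 m.+2 b l = mvar2 m.+2 s t.
  by apply: monom_ext => u; rewrite [RHS]yl y1 !mvar2E mvarE.
case: y y1 y2 {yB yl} => ? ? /= -> ->.
by case/mvar2_eq=> -[-> ->]; [left|right].
Qed.

Definition kcycle m (g : T m.+1 -> F) :=
  forall c, c \in kbasis Gam m m.+2 ->
    \sum_(x in kbasis Gam m.+1 m.+2) g x * kentry F x c = 0.

Lemma kcycle_edge m g (W : {set 'I_n}) s t : kcycle g -> #|W| = m.+2 ->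
  s \in W -> t \in W -> e s t -> g (bterm m.+1 W s) = 0 -> g (bterm m.+1 W t) = 0.
Proof.
move=> gC cW sW tW est gs.
have st : s != t by apply: contraTneq est => ->; rewrite (proj2 Ge).
have tWs : t \in W :\ s by rewrite !inE eq_sym st.
have cWs : #|W :\ s| = m.+1 by move: cW; rewrite (cardsD1 s) sW add1n => -[].
have cWst : #|W :\ s :\ t| = m by move: cWs; rewrite (cardsD1 t) tWs add1n => -[].
have Ws : t |: (W :\ s :\ t) = W :\ s by rewrite setD1K.
have Wt : s |: (W :\ s :\ t) = W :\ t.
  apply/setP => u; rewrite !inE; case: (eqVneq u s) => [->|] /=; last by case: (u == t).
  by rewrite st sW.
have := gC _ (mem_kbasis_deg2 Ge (or_intror est) cWst).
rewrite (big_supp2 (y1 := bterm m.+1 W s) (y2 := bterm m.+1 W t)); first last.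
- move=> y yB ys yt; apply/eqP; rewrite mulf_eq0; apply/orP; right.
  apply: contraTT isT => /(kentry_deg2_neq0 yB)[] yE; move: ys yt; rewrite yE /bterm.
    by rewrite Ws eqxx.
  by rewrite Wt eqxx.
- by apply: contra st => /eqP/bterm_inj->.
- exact: mem_bterm.
- exact: mem_bterm.
rewrite gs mul0r add0r (kentryE F (l := s)) /=.
- by move/eqP; rewrite mulf_eq0 (negbTE (sgn_neq0 _ _ _)) orbF => /eqP.
- by rewrite !inE eqxx andbF.
- by rewrite Wt.
- by move=> u; rewrite mvar2E mvarE addnC.
Qed.

Lemma kcycle_sq m g a (G : {set 'I_n}) : kcycle g -> #|G| = m.+1 -> a \in G ->
  g (mvar m.+2 a, G) = 0.
Proof.
move=> gC cG aG.
have cGa : #|G :\ a| = m by move: cG; rewrite (cardsD1 a) aG add1n => -[].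
have := gC _ (mem_kbasis_deg2 Ge (or_introl (erefl a)) cGa).
rewrite (big_supp1 (y1 := (mvar m.+2 a, G))); first last.
- move=> y yB ya; apply/eqP; rewrite mulf_eq0; apply/orP; right.
  by apply: contraTT isT => /(kentry_deg2_neq0 yB)[] yE; move: ya; rewrite yE setD1K // eqxx.
- exact: mem_kbasis_deg1.
rewrite (kentryE F (l := a)) /=.
- by move/eqP; rewrite mulf_eq0 (negbTE (sgn_neq0 _ _ _)) orbF => /eqP.
- by rewrite !inE eqxx.
- by rewrite setD1K.
- by move=> u; rewrite mvar2E mvarE.
Qed.

Definition pick_bterm i (W : {set 'I_n}) : T i :=
  if [pick v in W] is Some r then bterm i W r else (mone n i.+1, W).

Lemma pick_btermP i (W : {set 'I_n}) : #|W| = i.+1 ->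
  exists2 r, r \in W & pick_bterm i W = bterm i W r.
Proof.
move=> cW; have /set0Pn[x xW] : W != set0 by rewrite -card_gt0 cW.
rewrite /pick_bterm.
by case: pickP => [r rW|/(_ x)]; [exists r | rewrite xW].
Qed.

(* Once a cycle vanishes on pick_bterm W, kcycle_edge propagates this to every
   bterm W v along the connected induced graph on W, and kcycle_sq covers
   the basis elements x_a e_G with a in G. *)
Lemma kcycle_eq0 m g : (forall W : {set 'I_n}, #|W| = m.+2 -> connected_minus e (~: W)) ->
  kcycle g -> (forall W : {set 'I_n}, #|W| = m.+2 -> g (pick_bterm m.+1 W) = 0) ->
  {in kbasis Gam m.+1 m.+2, forall x, g x = 0}.
Proof.
move=> conn gC g_pick [x1 G] xB; have [a [/= -> cG]] := kbasis_deg1P xB.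
have [aG|aG] := boolP (a \in G); first exact: kcycle_sq.
set W := a |: G; have cW : #|W| = m.+2 by rewrite cardsU1 aG cG.
have aW : a \in W by rewrite setU11.
have [r rW pickW] := pick_btermP cW.
set R := [rel x y | [&& e x y, x \notin ~: W & y \notin ~: W]].
have closedR : closed R [pred v | g (bterm m.+1 W v) == 0].
  move=> u v /and3P[euv]; rewrite !in_setC !negbK => uW vW /=.
  apply/eqP/eqP; first exact: kcycle_edge.
  by apply: kcycle_edge => //; rewrite (proj1 Ge).
have /(closed_connect closedR) : connect R r a.
  by move/forallP/(_ r)/forallP/(_ a)/implyP: (conn W cW); rewrite !in_setC !negbK rW aW; apply.
by rewrite !inE -pickW g_pick // /bterm setU1K // eqxx => /esym/eqP.
Qed.

Lemma kbasis01_pick_bterm x : x \in kbasis Gam 0 1 ->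
  exists2 W : {set 'I_n}, #|W| = 1%N & x = pick_bterm 0 W.
Proof.
case: x => _ G /kbasis_deg1P[a [/= -> /eqP]]; rewrite cards_eq0 => /eqP->.
exists [set a]; first by rewrite cards1.
have [r] := pick_btermP (cards1 a).
by rewrite inE => /eqP-> ->; rewrite /bterm setDv.
Qed.

Definition sep_form i (W : {set 'I_n}) p q (x : T i) : F :=
  sgn W p * (x == bterm i W p)%:R - sgn W q * (x == bterm i W q)%:R.

Lemma sep_form_bterm i (W S : {set 'I_n}) p q v : p \in W -> q \in W -> v \in S ->
  sep_form W p q (bterm i S v) =
  if S == W then sgn W p * (v == p)%:R - sgn W q * (v == q)%:R else 0.
Proof.
move=> pW qW vS; rewrite /sep_form.
case: (eqVneq S W) => [->|SW]; first by rewrite !(inj_eq (@bterm_inj _ _)).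
have E u : u \in W -> (bterm i S v == bterm i W u) = false.
  by move=> uW; apply/negP => /eqP /(bterm_eq vS uW) [/eqP]; rewrite (negbTE SW).
by rewrite !E // !mulr0 subrr.
Qed.

Lemma sep_form_boundary i (W : {set 'I_n}) p q (a : T i) :
  p \in W -> q \in W -> p != q -> a \in kbasis Gam i.+1 i.+1 ->
  \sum_(x in kbasis Gam i i.+1) kentry F a x * sep_form W p q x = 0.
Proof.
case: a => a1 S pW qW pq aA; have [/= -> cS] := kbasis_deg0P aA.
under eq_bigr do rewrite kentry_deg0.
rewrite sum_part_boundary => [|v vS]; last exact: mem_bterm.
under eq_bigr => v vS do rewrite sep_form_bterm //.
have [->|_] := eqVneq S W; last by rewrite big1 // => v _; rewrite mulr0.
under eq_bigr do rewrite mulrBr.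
rewrite sumrB (big_supp1 (y1 := p)) ?(big_supp1 (y1 := q)) ?eqxx ?mulr1 ?sgnMsgn ?subrr //.
  by move=> y _ /negbTE->; rewrite !mulr0.
by move=> y _ /negbTE->; rewrite !mulr0.
Qed.

Lemma sep_form_part_boundary i (W P : {set 'I_n}) p q :
  #|W| = i.+1 -> P \subset W -> p \in P -> q \in W -> q \notin P ->
  \sum_(x in kbasis Gam i i.+1) part_boundary W P x * sep_form W p q x = 1.
Proof.
move=> cW PW pP qW qP.
have vq v : v \in P -> (v == q) = false by move=> vP; apply: contraNF qP => /eqP<-.
rewrite sum_part_boundary => [|v /(subsetP PW)]; last exact: mem_bterm.
have pW := subsetP PW p pP.
rewrite (big_supp1 (y1 := p)) // => [|v vP vp].
  by rewrite sep_form_bterm // !eqxx vq // mulr0 subr0 mulr1 sgnMsgn.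
by rewrite sep_form_bterm ?(subsetP PW v vP) // eqxx (negbTE vp) vq // !mulr0 subrr mulr0.
Qed.

End LinearStrand.

Section LinearStrandBetti.
Local Open Scope ring_scope.
Variables (F : fieldType) (n : nat) (e : rel 'I_n).
Hypothesis Ge : simple_graph e.
Local Notation Gam := (clique_complex e).
Local Notation part_boundary := (part_boundary F).
Local Notation sep_form := (sep_form F).

Definition pick_bterm_mx i : 'M[F]_(#|kbasis Gam i i.+1|, #|kbasis Gam i.+1 i.+1|) :=
  \matrix_(r, c) (enum_val r == pick_bterm i (enum_val c).2)%:R.

Lemma mulmx_pick_bterm_mx i (w : 'rV[F]_#|kbasis Gam i i.+1|) (W : {set 'I_n}) : #|W| = i.+1 ->
  exists c, (w *m pick_bterm_mx i) 0 c = coord w (pick_bterm i W).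
Proof.
move=> cW; have WA := mem_kbasis_deg0 e cW.
exists (enum_rank_in WA (mone n i.+1, W)).
rewrite (mulmx_set_matrix (fun x y => (x == pick_bterm i y.2)%:R)) enum_rankK_in //=.
have [r rW ->] := pick_btermP cW.
rewrite (big_supp1 (y1 := bterm i W r)) ?eqxx ?mulr1 ?mem_bterm //.
by move=> y _ /negbTE ->; rewrite mulr0.
Qed.

Lemma rank_kdiff_deg0 i : \rank (kdiff F Gam i i.+1) = #|kbasis Gam i.+1 i.+1|.
Proof.
apply/eqP/inj_row_free => z z0; apply: row_coord_eq0 => -[a1 W] aA.
have [/= a1E cW] := kbasis_deg0P aA; rewrite a1E.
have [r rW _] := pick_btermP cW.
have rB := mem_bterm e cW rW.
move/rowP/(_ (enum_rank_in rB (bterm i W r))): z0.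
rewrite /kdiff mulmx_set_matrix mxE enum_rankK_in //.
rewrite (big_supp1 (y1 := (mone n i.+1, W))) ?mem_kbasis_deg0 // => [|[y1 S] yA yW].
  rewrite (kentryE F (l := r)) /= ?setD1K ?setD11 // => [/eqP|t]; last by rewrite mvarE moneE.
  by rewrite mulf_eq0 (negbTE (sgn_neq0 _ _ _)) orbF => /eqP.
have [/= y1E cS] := kbasis_deg0P yA; rewrite y1E kentry_deg0 /part_boundary.
rewrite big1 ?mulr0 // => v vS.
case: eqP => [/esym/(bterm_eq vS rW)[SW _]|_]; last by rewrite mulr0.
by move: yW; rewrite y1E SW eqxx.
Qed.

Lemma betti_lin_eq0 i : (forall W : {set 'I_n}, #|W| = i.+1 -> connected_minus e (~: W)) ->
  betti F Gam i i.+1 = 0%N.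
Proof.
case: i => [|m] conn; rewrite /betti rank_kdiff_deg0; apply/eqP; rewrite subn_eq0.
  rewrite subn0 -(mxrank1 F #|kbasis Gam 0 1|).
  apply: (mxrank_le_inj_mul (P := pick_bterm_mx 0)) => w _ w0.
  apply: row_coord_eq0 => x /kbasis01_pick_bterm[W cW ->].
  by have [c <-] := mulmx_pick_bterm_mx w cW; rewrite w0 mxE.
rewrite -mxrank_ker; apply: (mxrank_le_inj_mul (P := pick_bterm_mx m.+1)) => w /sub_kermxP wD w0.
apply: row_coord_eq0; apply: (kcycle_eq0 Ge conn) => [c cC|W cW].
  by move/rowP/(_ (enum_rank_in cC c)): wD; rewrite mulmx_set_matrix !mxE enum_rankK_in.
by have [c <-] := mulmx_pick_bterm_mx w cW; rewrite w0 mxE.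
Qed.

Lemma part_boundary_mul_kdiff m (W P : {set 'I_n}) : #|W| = m.+2 -> P \subset W ->
  (forall a b, a \in P -> b \in W -> e a b -> b \in P) ->
  \row_k part_boundary W P (enum_val k) *m kdiff F Gam m m.+2 = 0.
Proof.
move=> cW PW closedP; apply/rowP => c.
rewrite /kdiff mulmx_set_matrix mxE.
under eq_bigr => x xB do rewrite coord_row_enum //.
rewrite sum_part_boundary => [|v vP]; last exact: mem_bterm (subsetP PW v vP).
exact: part_boundary_cycle (enum_valP c).
Qed.

(* A component P of the induced graph on W that misses v gives the cycle
   part_boundary W P, which the form sep_form W u v shows is no boundary. *)
Lemma betti_lin_gt0 m (W : {set 'I_n}) u v : #|W| = m.+2 -> u \in W -> v \in W ->
  ~~ connect [rel x y | [&& e x y, x \notin ~: W & y \notin ~: W]] u v ->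
  (0 < betti F Gam m.+1 m.+2)%N.
Proof.
set R := [rel x y | _] => cW uW vW uv.
set P := [set t in W | connect R u t].
have PW : P \subset W by apply/subsetP => t; rewrite inE => /andP[].
have uP : u \in P by rewrite inE uW connect0.
have vP : v \notin P by rewrite inE vW.
have closedP a b : a \in P -> b \in W -> e a b -> b \in P.
  rewrite !inE => /andP[aW ua] bW eab; rewrite bW (connect_trans ua) // connect1 //=.
  by rewrite eab !in_setC !negbK aW bW.
have rowA r : exists2 S : {set 'I_n}, #|S| = m.+2 &
    row r (kdiff F Gam m.+1 m.+2) = \row_k part_boundary S S (enum_val k).
  have [/= E cS] := kbasis_deg0P (enum_valP r).
  exists (enum_val r).2 => //; apply/rowP => k.
  by rewrite !mxE -kentry_deg0 -E -surjective_pairing.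
rewrite /betti subn_gt0.
apply: (mxrank_lt_ker (z := \row_k part_boundary W P (enum_val k))
                      (phi := \col_k sep_form W u v (enum_val k))).
- apply/row_matrixP => r; rewrite row_mul row0.
  by have [S cS ->] := rowA r; apply: part_boundary_mul_kdiff.
- exact: part_boundary_mul_kdiff cW PW closedP.
- apply/colP => r; rewrite [RHS]mxE.
  transitivity ((row r (kdiff F Gam m.+1 m.+2) *m \col_k sep_form W u v (enum_val k)) 0 0).
    by rewrite -row_mul [RHS]mxE.
  rewrite mulmx_col_set.
  under eq_bigr => x xB do rewrite coord_row_set_matrix //.
  apply: sep_form_boundary (enum_valP r) => //.
  by apply: contraNneq vP => <-.
- apply/eqP => /matrixP/(_ 0 0); rewrite mulmx_col_set mxE.
  under eq_bigr => x xB do rewrite coord_row_enum //.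
  by rewrite sep_form_part_boundary // => /eqP; rewrite oner_eq0.
Qed.

Lemma betti_lin_eq0_iff i : betti F Gam i i.+1 = 0%N <->
  (forall W : {set 'I_n}, #|W| = i.+1 -> connected_minus e (~: W)).
Proof.
split => [b0 W cW|]; last exact: betti_lin_eq0.
apply/forallP => u; apply/forallP => v; apply/implyP; rewrite !in_setC !negbK => /andP[uW vW].
apply/negPn/negP => uv; case: i b0 cW => [|m] b0 cW.
  by move/eqP/cards1P: cW uW vW uv => [w ->]; rewrite !inE => /eqP-> /eqP->; rewrite connect0.
by have := betti_lin_gt0 cW uW vW uv; rewrite b0.
Qed.

End LinearStrandBetti.

Section Connectivity.
Variables (n : nat) (e : rel 'I_n).

Lemma kconnected_induced k : (k <= n)%N ->
  kconnected e k <-> (forall W : {set 'I_n}, (n - k < #|W|)%N -> connected_minus e (~: W)).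
Proof.
move=> kn; rewrite /kconnected kn; split => [/forallP conn W cW | conn].
  apply: (implyP (conn (~: W))).
  by move: cW; have := cardsC W; rewrite card_ord; lia.
apply/forallP => S; apply/implyP => cS; rewrite -[S]setCK; apply: conn.
by move: cS; have := cardsC S; rewrite card_ord; lia.
Qed.

Lemma kconnected_kappa : kconnected e (kappa e).
Proof.
have k0 : kconnected e (@ord0 n) by rewrite /kconnected leq0n; apply/forallP.
by rewrite /kappa (bigmax_eq_arg ord0) //; case: arg_maxnP.
Qed.

Lemma leq_kappa k : kconnected e k -> (k <= kappa e)%N.
Proof.
move=> /[dup] /andP[kn _] ek.
exact: (@leq_bigmax_cond _ (fun j : 'I_n.+1 => kconnected e j) _ (Ordinal (kn : k < n.+1)%N)).
Qed.

End Connectivity.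

Lemma kconnected_betti (F : fieldType) n (e : rel 'I_n) (Ge : simple_graph e) k :
  (k <= n)%N -> kconnected e k <->
    (forall i, (n - k <= i)%N -> betti F (clique_complex e) i i.+1 = 0%N).
Proof.
move=> kn; rewrite kconnected_induced //; split => [conn i ki | b0 W].
  by apply/(betti_lin_eq0_iff F Ge) => W cW; apply: conn; rewrite cW; lia.
case cW: #|W| => [//|i] ki; apply: (betti_lin_eq0_iff F Ge i).1 cW.
by apply: b0; lia.
Qed.

Theorem theorem3p1 (F : fieldType) (charF0 : [pchar F]%R =i pred0)
  (n : nat) (e : rel 'I_n) (Ge : simple_graph e) :
  (forall k : nat, (k <= n)%N ->
     (kconnected e k <->
      (forall i : nat, (n - k <= i)%N -> betti F (clique_complex e) i i.+1 = 0%N)))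
  /\
  ((forall i : nat, (n - kappa e <= i)%N ->
      betti F (clique_complex e) i i.+1 = 0%N)
   /\ (forall k : nat, (k <= n)%N ->
        (forall i : nat, (n - k <= i)%N -> betti F (clique_complex e) i i.+1 = 0%N) ->
        (k <= kappa e)%N)).
Proof.
have betti0 := kconnected_betti F Ge.
have kappa_n : (kappa e <= n)%N by case/andP: (kconnected_kappa e).
split=> //; split; first exact/(betti0 _ kappa_n)/kconnected_kappa.
by move=> k kn /(betti0 k kn)/leq_kappa.
Qed.
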